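(* For every ordinal $\alpha$ there exists a peripherally Hausdorff space $X$ with $\mathrm{rank}_{T_2}(X)=\alpha$.
   Context: For a topological space $X$ and $x\in X$, let $[x]:=\bigcap\{\overline{U}:U \text{ an open neighbourhood of } x\}$. Define $\alpha$-Hausdorff spaces by transfinite recursion: a space is $0$-Hausdorff if it is Hausdorff; for an ordinal $\alpha>0$, a $T_1$ space $X$ is $\alpha$-Hausdorff if for every $x\in X$ the subspace $[x]$ (with topology inherited from $X$) is $\beta_x$-Hausdorff for some ordinal $\beta_x<\alpha$. A space is peripherally Hausdorff if it is $\alpha$-Hausdorff for some ordinal $\alpha$, and then $\mathrm{rank}_{T_2}(X):=\min\{\alpha: X \text{ is } \alpha\text{-Hausdorff}\}$. *)

From HB Require Import structures.
From mathcomp Require Import all_boot all_order all_algebra.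
From mathcomp Require Import all_classical all_reals all_analysis.
Set Implicit Arguments. Unset Strict Implicit. Unset Printing Implicit Defensive.
Local Open Scope classical_set_scope.

Definition pclosure {T : topologicalType} (x : T) : set T :=
  [set y | forall U : set T, open_nbhs x U -> closure U y].

(** The subspace [x] with the subspace topology (set_type carries the
    initial topology of the inclusion). *)
Definition pclosure_space {T : topologicalType} (x : T) : topologicalType :=
  set_type (pclosure x).

(** Ordinals are represented by elements of a well-ordered type:
    [R] is a strict well-order on [W]. *)
Definition strict_well_order {W : Type} (R : W -> W -> Prop) : Prop :=
  well_founded R /\
  (forall a b c, R a b -> R b c -> R a c) /\
  (forall a b, R a b \/ a = b \/ R b a).

(** alpha-Hausdorff, by (well-founded) transfinite recursion on R.
    The ordinal w is 0 iff it has no R-predecessor. *)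
Inductive alpha_hausdorff {W : Type} (R : W -> W -> Prop) :
    W -> topologicalType -> Prop :=
  | ah_zero (w : W) (T : topologicalType) :
      (forall v, ~ R v w) -> hausdorff_space T -> alpha_hausdorff R w T
  | ah_succ (w : W) (T : topologicalType) :
      (exists v, R v w) -> accessible_space T ->
      (forall x : T, exists2 v, R v w & alpha_hausdorff R v (pclosure_space x)) ->
      alpha_hausdorff R w T.

Definition peripherally_hausdorff (T : topologicalType) : Prop :=
  exists (W : Type) (R : W -> W -> Prop) (w : W),
    strict_well_order R /\ alpha_hausdorff R w T.

Definition rankT2_eq {W : Type} (R : W -> W -> Prop) (T : topologicalType) (w : W) : Prop :=
  alpha_hausdorff R w T /\ (forall v, R v w -> ~ alpha_hausdorff R v T).

From HB Require Import structures.
From mathcomp Require Import all_boot all_order all_algebra.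
From mathcomp Require Import all_classical all_reals all_analysis.
Local Open Scope classical_set_scope.

(* For an ordinal a, let X_a consist of two base points and, for every b < a,
   a sequence of isolated points (b, n) converging to every point of a copy of
   X_b. Any two points of the copy of X_b have intersecting neighbourhoods
   (both contain a tail of the same sequence), whereas the blocks indexed by
   different b, the base points and the isolated points are clopen. So [x] is
   the copy of X_b when x lies in it, and {x} otherwise. By induction on a,
   X_a is a-Hausdorff; and it is not v-Hausdorff for v < a: not for v = 0
   since the copy of X_v is not Hausdorff, and not for v > 0 since [x], for x
   in the copy of X_v, would be u-Hausdorff for some u < v.
   Being alpha-Hausdorff is invariant under embeddings, which lets every
   subspace be handled as a subset of the single ambient space of points. *)

Section relative_separation.
Context {Z : topologicalType}.
Implicit Types (A U V : set Z) (x y : Z).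

Definition hausdorff_on A := forall x y, A x -> A y -> x <> y ->
  exists U V, [/\ open U, open V, U x, V y & forall z, A z -> U z -> V z -> False].

Definition accessible_on A := forall x y, A x -> A y -> x <> y ->
  exists U, [/\ open U, U x & ~ U y].

Definition pclosure_in A x : set Z :=
  [set y | A y /\ forall U V, open U -> open V -> U x -> V y ->
     exists z, [/\ A z, U z & V z]].

Lemma not_pclosure_in {A U V x y} : open U -> open V -> U x -> V y ->
  (forall z, U z -> V z -> False) -> ~ pclosure_in A x y.
Proof. by move=> oU oV Ux Vy UV [_ /(_ U V oU oV Ux Vy)] [z [_ /UV]]. Qed.

Lemma not_pclosure_in_set1 {A x y} : open [set y] -> open (~` [set y]) -> x <> y ->
  ~ pclosure_in A x y.
Proof. by move=> oy oCy nexy; apply: not_pclosure_in oCy oy nexy erefl _ => z. Qed.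

Lemma pclosure_in_set1 A x : A x -> open [set x] -> open (~` [set x]) ->
  pclosure_in A x = [set x].
Proof.
move=> Ax ox oCx; apply/seteqP; split => y; last first.
  by move=> ->; split => // U V _ _ Ux Vx; exists x.
move=> xy; apply: contrapT => yx.
exact: (not_pclosure_in ox oCx erefl yx (fun z zx zNx => zNx zx) xy).
Qed.

End relative_separation.

Inductive alpha_hausdorff_on {W : Type} (R : W -> W -> Prop) {Z : topologicalType} :
    W -> set Z -> Prop :=
  | alpha_hausdorff_on_zero w A :
      (forall v, ~ R v w) -> hausdorff_on A -> alpha_hausdorff_on R w A
  | alpha_hausdorff_on_succ w A :
      (exists v, R v w) -> accessible_on A ->
      (forall x, A x -> exists2 v, R v w & alpha_hausdorff_on R v (pclosure_in A x)) ->
      alpha_hausdorff_on R w A.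

Lemma alpha_hausdorff_on_set1 {W : Type} (R : W -> W -> Prop) {Z : topologicalType}
    (m : W) (x : Z) :
  (forall v, ~ R v m) -> alpha_hausdorff_on R m [set x].
Proof. by move=> m_min; apply: alpha_hausdorff_on_zero => // y z -> ->. Qed.

Definition embedding {T Z : topologicalType} (e : T -> Z) :=
  injective e /\ forall S : set T, open S <-> exists2 B, open B & S = e @^-1` B.

Lemma embedding_set_val {Z : topologicalType} (A : set Z) : embedding (@set_val Z A).
Proof.
split; first by move=> a b /val_inj.
by move=> S; split=> [[B oB <-]|[B oB ->]]; exists B.
Qed.

Lemma embedding_comp {S T Z : topologicalType} {f : S -> T} {g : T -> Z} :
  embedding f -> embedding g -> embedding (g \o f).
Proof.
move=> [inj_f open_f] [inj_g open_g]; split; first exact: inj_comp.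
move=> P; rewrite open_f; split.
  by move=> [B /open_g[C oC ->] ->]; exists C.
by move=> [C oC ->]; exists (g @^-1` C) => //; apply/open_g; exists C.
Qed.

Lemma range_set_val {T : Type} (A : set T) : range (@set_val T A) = A.
Proof.
apply/seteqP; split; first by move=> _ [a _ <-]; exact: set_mem (valP a).
by move=> x Ax; exists (exist _ x (mem_set Ax)).
Qed.

Lemma range_comp_set_val {T Z : Type} (e : T -> Z) (A : set T) :
  range (e \o @set_val T A) = e @` A.
Proof. by rewrite -(image_comp (@set_val T A) e) range_set_val. Qed.

Section embedding_theory.
Context {T Z : topologicalType} {e : T -> Z} (He : embedding e).

Lemma hausdorff_embedding : hausdorff_space T <-> hausdorff_on (range e).
Proof.
have [inj_e open_e] := He; rewrite open_hausdorff; split.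
  move=> sep _ _ [x _ <-] [y _ <-] nexy.
  have /sep[[P Q] /= [Px Qy] [/open_e[U oU eP] /open_e[V oV eQ] /eqP PQ]] : x != y.
    by apply/eqP => exy; apply: nexy; rewrite exy.
  move: Px Qy; rewrite eP eQ !inE => Ux Vy.
  exists U, V; split => // _ [t _ <-] Ut Vt.
  have : (P `&` Q) t by rewrite eP eQ.
  by rewrite PQ.
move=> sep x y /eqP nexy.
have [|U [V [oU oV Ux Vy UV]]] := sep (e x) (e y) (imageT _ _) (imageT _ _).
  by move/inj_e.
exists (e @^-1` U, e @^-1` V); first by rewrite !inE.
split; [by apply/open_e; exists U|by apply/open_e; exists V|].
by apply/eqP/seteqP; split => // t [Ut Vt]; exact: UV (imageT _ _) Ut Vt.
Qed.

Lemma accessible_embedding : accessible_space T <-> accessible_on (range e).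
Proof.
have [inj_e open_e] := He; split.
  move=> sep _ _ [x _ <-] [y _ <-] nexy.
  have /sep[P [/open_e[U oU ->]]] : x != y.
    by apply/eqP => exy; apply: nexy; rewrite exy.
  by rewrite !inE => Ux Uy; exists U.
move=> sep x y /eqP nexy.
have [|U [oU Ux Uy]] := sep (e x) (e y) (imageT _ _) (imageT _ _).
  by move/inj_e.
by exists (e @^-1` U); rewrite !inE; split => //; apply/open_e; exists U.
Qed.

Lemma pclosureE (x y : T) : pclosure x y <->
  forall U V : set T, open U -> open V -> U x -> V y -> exists z, U z /\ V z.
Proof.
split => [xy U V oU oV Ux Vy|sep U [oU Ux] B].
  have [z [Uz Vz]] := xy U (conj oU Ux) V (open_nbhs_nbhs (conj oV Vy)).
  by exists z.
rewrite nbhsE => -[V [oV Vy] VB].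
by have [z [Uz Vz]] := sep U V oU oV Ux Vy; exists z; split => //; apply: VB.
Qed.

Lemma image_pclosure (x : T) : e @` pclosure x = pclosure_in (range e) (e x).
Proof.
have [inj_e open_e] := He; apply/seteqP; split.
  move=> _ [y /pclosureE xy <-]; split; first exact: imageT.
  move=> U V oU oV Ux Vy.
  have [||z [Uz Vz]] := xy (e @^-1` U) (e @^-1` V) _ _ Ux Vy.
  - by apply/open_e; exists U.
  - by apply/open_e; exists V.
  by exists (e z); split => //; exact: imageT.
move=> _ [[y _ <-] xy]; exists y => //; apply/pclosureE.
move=> _ _ /open_e[U oU ->] /open_e[V oV ->] Ux Vy.
by have [_ [[z _ <-] Uz Vz]] := xy U V oU oV Ux Vy; exists z.
Qed.

End embedding_theory.

Section alpha_hausdorff_embedding.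
Context {W : Type} (R : W -> W -> Prop) {Z : topologicalType}.

Lemma alpha_hausdorff_range w (T : topologicalType) :
  alpha_hausdorff R w T ->
  forall e : T -> Z, embedding e -> alpha_hausdorff_on R w (range e).
Proof.
move: w T; fix IH 3 => w T ahT.
case: ahT => [{}w {}T w_min hT e He|{}w {}T w_succ aT pclT e He].
  by apply: alpha_hausdorff_on_zero => //; apply/hausdorff_embedding.
apply: alpha_hausdorff_on_succ => //; first exact/accessible_embedding.
move=> _ [x _ <-]; case: (pclT x) => v Rvw pclx; exists v => //.
rewrite -image_pclosure // -(range_comp_set_val e).
exact: IH _ _ pclx _ (embedding_comp (embedding_set_val _) He).
Qed.

Lemma alpha_hausdorff_of_range w (A : set Z) :
  alpha_hausdorff_on R w A ->
  forall (T : topologicalType) (e : T -> Z), embedding e -> range e = A ->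
  alpha_hausdorff R w T.
Proof.
move: w A; fix IH 3 => w A ahA.
case: ahA => [{}w {}A w_min hA T e He eA|{}w {}A w_succ aA pclA T e He eA].
  by apply: ah_zero => //; apply/(hausdorff_embedding He); rewrite eA.
apply: ah_succ => //; first by apply/(accessible_embedding He); rewrite eA.
move=> x; case: (pclA (e x)); first by rewrite -eA; exact: imageT.
move=> v Rvw pclx.
exists v => //; apply: IH _ _ pclx _ _ (embedding_comp (embedding_set_val _) He) _.
by rewrite range_comp_set_val image_pclosure // eA.
Qed.

Lemma alpha_hausdorff_embedding w (T : topologicalType) (e : T -> Z) :
  embedding e -> alpha_hausdorff R w T <-> alpha_hausdorff_on R w (range e).
Proof.
move=> He; split => [ahT|ahA]; first exact: alpha_hausdorff_range ahT e He.
exact: alpha_hausdorff_of_range ahA T e He erefl.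
Qed.

Lemma alpha_hausdorff_set_type w (A : set Z) :
  alpha_hausdorff R w (set_type A) <-> alpha_hausdorff_on R w A.
Proof.
rewrite -[in X in _ <-> X](range_set_val A) -alpha_hausdorff_embedding //.
exact: embedding_set_val.
Qed.

End alpha_hausdorff_embedding.

Lemma alpha_hausdorff_on_image {W : Type} (R : W -> W -> Prop) {Z Z' : topologicalType}
    (e : Z -> Z') (w : W) (A : set Z) :
  embedding e -> alpha_hausdorff_on R w A <-> alpha_hausdorff_on R w (e @` A).
Proof.
move=> He; rewrite -alpha_hausdorff_set_type -range_comp_set_val.
exact: alpha_hausdorff_embedding (embedding_comp (embedding_set_val A) He).
Qed.

Inductive rank_point (W : Type) :=
  | Base of bool
  | Isolated of W & nat
  | Copy of W & rank_point W.
Arguments Base {W}.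
Arguments Isolated {W}.
Arguments Copy {W}.

HB.instance Definition _ W := gen_eqMixin (rank_point W).
HB.instance Definition _ W := gen_choiceMixin (rank_point W).

Section rank_open.
Context {W : Type}.
Implicit Types (p q y : rank_point W) (P Q : set (rank_point W)).

Fixpoint rank_nbhs p P : Prop :=
  match p with
  | Copy b q => (\forall n \near \oo, P (Isolated b n)) /\ rank_nbhs q (P \o Copy b)
  | _ => P p
  end.

Lemma rank_nbhsS p P Q : P `<=` Q -> rank_nbhs p P -> rank_nbhs p Q.
Proof.
elim: p P Q => [b|b n|b q IH] P Q PQ /=; try exact: PQ.
move=> [evP qP]; split; first by apply: filterS evP => n /PQ.
by apply: IH qP => r /PQ.
Qed.

Lemma rank_nbhsT p : rank_nbhs p setT.
Proof. by elim: p => [b|b n|b q IH] //=; split; first exact: filterT. Qed.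

Lemma rank_nbhsI p P Q : rank_nbhs p P -> rank_nbhs p Q -> rank_nbhs p (P `&` Q).
Proof.
elim: p P Q => [b|b n|b q IH] P Q //= [evP qP] [evQ qQ].
by split; [exact: filterI|exact: IH].
Qed.

Definition rank_open P := forall p, P p -> rank_nbhs p P.

Lemma rank_openT : rank_open setT.
Proof. by move=> p _; exact: rank_nbhsT. Qed.

Lemma rank_openI : setI_closed rank_open.
Proof. by move=> P Q oP oQ p [Pp Qp]; exact: rank_nbhsI (oP _ Pp) (oQ _ Qp). Qed.

Lemma rank_open_bigcup (I : Type) (F : I -> set (rank_point W)) :
  (forall i, rank_open (F i)) -> rank_open (\bigcup_i F i).
Proof.
by move=> oF p [i _ Fip]; apply: rank_nbhsS (oF i p Fip) => r Fir; exists i.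
Qed.

End rank_open.

HB.instance Definition _ W := isOpenTopological.Build (rank_point W)
  (@rank_openT W) (@rank_openI W) (@rank_open_bigcup W).

Section rank_topology.
Context {W : Type}.
Implicit Types (p q y : rank_point W) (P Q : set (rank_point W)).

Lemma rank_openE P : open P = rank_open P.
Proof. by []. Qed.

Lemma rank_nbhs_neq p y : p <> y -> rank_nbhs p (~` [set y]).
Proof.
elim: p y => [b|b n|b q IH] y //= ney; split.
  case: y {ney} => [c|c m|c r]; try by apply: nearW.
  by apply: filterS (nbhs_infty_gt m) => n /[swap] -[_ ->]; rewrite ltnn.
case: y ney => [c|c m|c r] ney; try by apply: rank_nbhsS (rank_nbhsT q).
have [eqr|neqr] := pselect (q = r).
  by apply: rank_nbhsS (rank_nbhsT q) => s _ [ecb _]; apply: ney; rewrite ecb eqr.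
by apply: rank_nbhsS (IH _ neqr) => s nesr [_ esr]; exact: nesr.
Qed.

Lemma open_setC1 y : open (~` [set y]).
Proof. by move=> p; exact: rank_nbhs_neq. Qed.

Lemma open_set1_Base (b : bool) : open [set @Base W b].
Proof. by move=> p ->. Qed.

Lemma open_set1_Isolated (b : W) (n : nat) : open [set Isolated b n].
Proof. by move=> p ->. Qed.

Definition rank_block (b : W) : set (rank_point W) :=
  [set p | if p is Isolated c _ then c = b else if p is Copy c _ then c = b else False].

Lemma open_rank_block (b : W) : open (rank_block b).
Proof.
move=> [c|c n|c q] //= ->; split; first by apply: nearW.
by apply: rank_nbhsS (rank_nbhsT q).
Qed.

Lemma embedding_Copy (b : W) : embedding (Copy b).
Proof.
split=> [p q [] //|S]; split => [oS|[B]]; last first.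
  by rewrite !rank_openE => oB -> q /oB[].
exists (rank_block b `&` [set p | if p is Copy _ q then S q else True]); last first.
  by apply/seteqP; split=> [q Sq|q [_ Sq]].
rewrite rank_openE => -[c|c n|c q] //= [-> Sq]; split; first by apply: nearW.
by apply: rank_nbhsS (oS _ Sq).
Qed.

Lemma accessible_on_rank_point (A : set (rank_point W)) : accessible_on A.
Proof.
by move=> x y _ _ nexy; exists (~` [set y]); split=> [|//|]; [exact: open_setC1|apply].
Qed.

End rank_topology.

Section rank_space.
Context {W : Type} (R : W -> W -> Prop).

Fixpoint rank_space (a : W) (p : rank_point W) : Prop :=
  match p with
  | Base _ => True
  | Isolated b _ => R b a
  | Copy b q => R b a /\ rank_space b q
  end.

Lemma pclosure_in_rank_space_Copy a b q : R b a -> rank_space b q ->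
  pclosure_in (rank_space a) (Copy b q) = Copy b @` rank_space b.
Proof.
move=> Rba qb; apply/seteqP; split => [[c|c m|c r] qy|_ [r rb <-]].
- exfalso; apply: (not_pclosure_in_set1 _ _ _ qy) => //; [exact: open_set1_Base|exact: open_setC1].
- exfalso; apply: (not_pclosure_in_set1 _ _ _ qy) => //; [exact: open_set1_Isolated|exact: open_setC1].
- have [ecb|necb] := pselect (c = b).
    by case: qy; rewrite ecb => -[_ rb] _; exists r.
  case: (not_pclosure_in (open_rank_block b) (open_rank_block c) _ _ _ qy) => //=.
  by move=> [d|d n|d s] //= -> /esym.
split; first by split.
move=> U V; rewrite !rank_openE => oU oV /oU[evU _] /oV[evV _].
have [n [Un Vn]] := filter_ex (filterI evU evV).
by exists (Isolated b n).
Qed.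

Lemma hausdorff_on_rank_space_min a : (forall v, ~ R v a) -> hausdorff_on (rank_space a).
Proof.
move=> a_min x y.
have base p : rank_space a p -> exists b, p = Base b.
  by case: p => [b _|b n /a_min|b q [/a_min]] //; exists b.
move=> /base[b ->] /base[c ->] nebc; exists [set Base b], [set Base c].
split=> [||//|//|_ _ -> [ebc]]; [exact: open_set1_Base|exact: open_set1_Base|].
by rewrite ebc in nebc.
Qed.

Lemma not_hausdorff_on_rank_space a v : R v a -> ~ hausdorff_on (rank_space a).
Proof.
move=> Rva sep.
have [//|U [V [oU oV Ut Vf UV]]] :=
  sep (Copy v (Base true)) (Copy v (Base false)) (conj Rva I) (conj Rva I).
have : pclosure_in (rank_space a) (Copy v (Base true)) (Copy v (Base false)).
  by rewrite pclosure_in_rank_space_Copy //; exists (Base false).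
by move=> [_ /(_ U V oU oV Ut Vf)] [z [/UV]].
Qed.

End rank_space.

Lemma well_founded_minimal_below {W : Type} {R : W -> W -> Prop} {v a : W} :
  well_founded R -> (forall x y z, R x y -> R y z -> R x z) -> R v a ->
  exists2 m, R m a & forall u, ~ R u m.
Proof.
move=> wf trans; elim: (wf v) => {}v _ IH Rva.
have [[u Ruv]|v_min] := pselect (exists u, R u v); first exact: IH Ruv (trans _ _ _ Ruv Rva).
by exists v => // u Ruv; apply: v_min; exists u.
Qed.

Section rank_space_rank.
Context {W : Type} (R : W -> W -> Prop).

Lemma alpha_hausdorff_on_rank_space a : well_founded R ->
  (forall x y z, R x y -> R y z -> R x z) -> alpha_hausdorff_on R a (rank_space R a).
Proof.
move=> wf trans; elim: (wf a) => {}a _ IH.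
have [[v Rva]|a_min] := pselect (exists v, R v a); last first.
  apply: alpha_hausdorff_on_zero; first by move=> v Rva; apply: a_min; exists v.
  by apply: hausdorff_on_rank_space_min => v Rva; apply: a_min; exists v.
have [m Rma m_min] := well_founded_minimal_below wf trans Rva.
have pclosure_isolated x : rank_space R a x -> open [set x] ->
    exists2 u, R u a & alpha_hausdorff_on R u (pclosure_in (rank_space R a) x).
  move=> ax ox; exists m => //; rewrite pclosure_in_set1 //; last exact: open_setC1.
  exact: alpha_hausdorff_on_set1.
apply: alpha_hausdorff_on_succ; [by exists v|exact: accessible_on_rank_point|].
move=> [b|b n|b q] xa; [exact/pclosure_isolated/open_set1_Base|
                        exact/pclosure_isolated/open_set1_Isolated|].
case: xa => Rba qb; exists b => //.
rewrite pclosure_in_rank_space_Copy // -alpha_hausdorff_on_image; first exact: IH.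
exact: embedding_Copy.
Qed.

Lemma not_alpha_hausdorff_on_rank_space a v : well_founded R ->
  R v a -> ~ alpha_hausdorff_on R v (rank_space R a).
Proof.
move=> wf; elim: (wf a) v => {}a _ IH v Rva ah.
move: Rva (erefl (rank_space R a)).
case: v {1}(rank_space R a) / ah => [v A _ hA|v A _ _ pclA] Rva eA; subst A.
  exact: not_hausdorff_on_rank_space Rva hA.
have [|u Ruv] := pclA (Copy v (Base true)); first by [].
rewrite pclosure_in_rank_space_Copy // -alpha_hausdorff_on_image; last exact: embedding_Copy.
exact: IH v Rva u Ruv.
Qed.

End rank_space_rank.

Theorem theorem18 :
  forall (W : Type) (R : W -> W -> Prop), strict_well_order R ->
  forall alpha : W,
    exists X : topologicalType, peripherally_hausdorff X /\ rankT2_eq R X alpha.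
Proof.
move=> W R wo a; have [wf [trans _]] := wo.
exists (set_type (rank_space R a)).
have X_a : alpha_hausdorff R a (set_type (rank_space R a)).
  by apply/alpha_hausdorff_set_type; exact: alpha_hausdorff_on_rank_space.
split; first by exists W, R, a.
split=> // v Rva /alpha_hausdorff_set_type.
exact: not_alpha_hausdorff_on_rank_space.
Qed.
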